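(* Let $\varepsilon\in(0,\frac12)$ and $d\ge1$, and let $G$ be a graph with $|G|\ge \varepsilon^{-10d^2}$. Let $x:=\varepsilon^{5d}$. Assume that for every induced subgraph $F$ of $G$ with $|F|\ge \varepsilon^{d}|G|$, there exists $k\in[2,1/x]$ such that there is a pure or $x$-sparse $(k,|F|/k^d)$-blockade in $F$. Then there is an $(\varepsilon^{-1},{x^{2d}|G|})$-blockade $(B_1,\ldots,B_{\ell})$ in $G$, such that for all distinct $i,j\in[\ell]$, $(B_i,B_j)$ is either complete or weakly $\varepsilon^d$-sparse in $G$.
   Context: Graphs are finite and simple; $|G|$ is the number of vertices of $G$. A blockade in $G$ is a sequence $(B_1,\ldots,B_m)$ of disjoint subsets of $V(G)$, with length $m$ and width $\min_i|B_i|$; a $(k,w)$-blockade has length at least $k$ and width at least $w$. A pair $(A,B)$ of disjoint sets is complete if all edges between them are present, anticomplete if none are; a blockade is pure if every pair of its blocks is complete or anticomplete. For disjoint $A,B$, $B$ is $x$-sparse to $A$ if every vertex of $B$ has at most $x|A|$ neighbours in $A$; a blockade $(B_1,\ldots,B_m)$ is $x$-sparse if $B_j$ is $x$-sparse to $B_i$ for all $i<j$. $(A,B)$ is weakly $x$-sparse if the number of edges between $A$ and $B$ is at most $x|A||B|$. *)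

(* A graph is a symmetric irreflexive relation e on a finType T. *)
From HB Require Import structures.
From mathcomp Require Import all_boot all_order all_algebra.
Set Implicit Arguments. Unset Strict Implicit. Unset Printing Implicit Defensive.
Import Order.TTheory GRing.Theory Num.Theory.
Local Open Scope ring_scope.

Section Defs.
Variables (T : finType) (e : rel T).

Definition blockade (F : {set T}) (B : seq {set T}) : Prop :=
  (forall i, (i < size B)%N -> nth set0 B i \subset F) /\
  (forall i j, (i < j)%N -> (j < size B)%N ->
     [disjoint nth set0 B i & nth set0 B j]).

Definition width_ge (R : numDomainType) (B : seq {set T}) (w : R) : Prop :=
  forall i, (i < size B)%N -> w <= (#|nth set0 B i|)%:R.

Definition complete (A C : {set T}) : Prop :=
  forall a c, a \in A -> c \in C -> e a c.

Definition anticomplete (A C : {set T}) : Prop :=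
  forall a c, a \in A -> c \in C -> ~~ e a c.

Definition pure_blockade (B : seq {set T}) : Prop :=
  forall i j, (i < j)%N -> (j < size B)%N ->
    complete (nth set0 B i) (nth set0 B j) \/
    anticomplete (nth set0 B i) (nth set0 B j).

Definition sparse_to (R : numDomainType) (x : R) (C A : {set T}) : Prop :=
  forall v, v \in C -> (#|[set u in A | e v u]|)%:R <= x * (#|A|)%:R.

Definition sparse_blockade (R : numDomainType) (x : R) (B : seq {set T}) : Prop :=
  forall i j, (i < j)%N -> (j < size B)%N ->
    sparse_to x (nth set0 B j) (nth set0 B i).

Definition weakly_sparse (R : numDomainType) (x : R) (A C : {set T}) : Prop :=
  (#|[set p in setX A C | e p.1 p.2]|)%:R <= x * (#|A|)%:R * (#|C|)%:R.

End Defs.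

From HB Require Import structures.
From mathcomp Require Import all_boot all_order all_algebra.
From Stdlib Require Import Classical.
From mathcomp Require Import zify lra.
Import Order.TTheory GRing.Theory Num.Theory.
Local Open Scope ring_scope.
Set Implicit Arguments. Unset Strict Implicit. Unset Printing Implicit Defensive.

(* Suppose no such blockade exists.  Then, by induction on |F|, every F with
   |F| >= eps^d |G| contains a family P of pairwise disjoint sets, each of size
   at least eps^(2d) |G| and any two of them complete or weakly eps^d-sparse,
   with |F| <= eps^d |P|^d |G|.  Indeed, the hypothesis gives a pure or x-sparse
   blockade of some length k in F, and k < 1/eps since otherwise it would
   already be the required blockade.  If |F|/k^d < eps^d |G|, its blocks
   themselves form P; otherwise every block contains such a family by
   induction, and their union works for F, since it has at least k times as
   many members as the smallest of them.  Two sets taken from different blocks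
   are good because the blocks are complete, anticomplete or x-sparse to each
   other, and x |G| <= eps^d |C| for every member C.  For F = G the bound gives
   |P| >= 1/eps, so P is the required blockade after all. *)


Section Blockades.
Variable T : finType.
Implicit Types (F : {set T}) (B : seq {set T}).

Lemma blockade_disjoint F B i j : blockade F B ->
  (i < size B)%N -> (j < size B)%N -> i != j ->
  [disjoint nth set0 B i & nth set0 B j].
Proof.
case=> _ disjB iB jB; case: ltngtP => // [ij|ji] _; first exact: disjB.
by rewrite disjoint_sym; apply: disjB.
Qed.

Lemma blockade_card_lt F B i : blockade F B -> (1 < size B)%N ->
  (forall j, (j < size B)%N -> 0 < #|nth set0 B j|)%N ->
  (i < size B)%N -> (#|nth set0 B i| < #|F|)%N.
Proof.
move=> blB B2 B_gt0 iB; have [subF _] := blB.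
have [j jB ji] : exists2 j, (j < size B)%N & j != i.
  by case: i iB => [|i] iB; [exists 1%N | exists 0%N; rewrite // (ltn_trans _ B2)].
have := subset_leq_card (_ : nth set0 B i :|: nth set0 B j \subset F).
rewrite subUset !subF // => /(_ isT).
rewrite cardsU (disjoint_setI0 (blockade_disjoint blB iB jB _)) 1?eq_sym //.
by rewrite cards0 subn0; have := B_gt0 j jB; lia.
Qed.

Lemma blockade_enum F (P : {set {set T}}) :
  (forall C, C \in P -> C \subset F) ->
  (forall C D, C \in P -> D \in P -> C != D -> [disjoint C & D]) ->
  blockade F (enum P).
Proof.
move=> subF disjP.
have nth_in i : (i < size (enum P))%N -> nth set0 (enum P) i \in P.
  by move=> iP; rewrite -mem_enum mem_nth.
split=> [i iP | i j ij jP]; first exact/subF/nth_in.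
have iP := ltn_trans ij jP.
by apply: disjP; rewrite ?nth_in // nth_uniq ?enum_uniq // ltn_eqF.
Qed.

End Blockades.

Section EdgeCounting.
Variables (T : finType) (e : rel T).
Implicit Types A C D : {set T}.

Local Notation edge_pairs A C := [set p in setX A C | e p.1 p.2].

Lemma card_edge_pairs A C :
  #|edge_pairs A C| = (\sum_(a in A) #|[set c in C | e a c]|)%N.
Proof.
rewrite (eq_bigr (fun a => \sum_(c | (c \in C) && e a c) 1)%N); last first.
  by move=> a _; rewrite -sum1_card; apply: eq_bigl => c; rewrite inE.
rewrite pair_big_dep /= sum1_card; apply: eq_card => p.
by rewrite !inE -andbA.
Qed.

Lemma complete_sub A C A' C' : A' \subset A -> C' \subset C ->
  complete e A C -> complete e A' C'.
Proof. by move=> sA sC cAC a c /(subsetP sA) aA /(subsetP sC) cC; apply: cAC. Qed.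

Lemma anticomplete_sub A C A' C' : A' \subset A -> C' \subset C ->
  anticomplete e A C -> anticomplete e A' C'.
Proof. by move=> sA sC aAC a c /(subsetP sA) aA /(subsetP sC) cC; apply: aAC. Qed.

Lemma complete_sym A C : symmetric e -> complete e A C -> complete e C A.
Proof. by move=> e_sym cAC c a cC aA; rewrite e_sym; apply: cAC. Qed.

Lemma weakly_sparse_sym (R : numDomainType) (x : R) A C : symmetric e ->
  weakly_sparse e x A C -> weakly_sparse e x C A.
Proof.
move=> e_sym; rewrite /weakly_sparse mulrAC.
have -> : edge_pairs C A = swap_pair @: edge_pairs A C.
  apply/setP => -[c a]; rewrite !inE /= e_sym.
  apply/idP/imsetP => [/andP[/andP[cC aA] eac] | [[a' c'] + [-> ->]]].
    by exists (a, c); rewrite // !inE /= aA cC.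
  by rewrite !inE /= -andbA andbCA andbA.
by rewrite card_imset //; apply: can_inj swap_pairK.
Qed.

Lemma anticomplete_weakly_sparse (R : numDomainType) (x : R) A C : 0 <= x ->
  anticomplete e A C -> weakly_sparse e x A C.
Proof.
move=> x_ge0 aAC; rewrite /weakly_sparse.
suff -> : edge_pairs A C = set0 by rewrite cards0 !mulr_ge0 ?ler0n.
apply/setP => -[a c]; rewrite !inE /=.
by apply/negP => /andP[/andP[aA cC]]; apply/negP/aAC.
Qed.

Lemma sparse_to_weakly_sparse (R : numDomainType) (x y : R) A1 A2 C D :
  sparse_to e x A2 A1 -> C \subset A1 -> D \subset A2 ->
  x * #|A1|%:R <= y * #|C|%:R -> weakly_sparse e y D C.
Proof.
move=> sp sC sD xy; rewrite /weakly_sparse card_edge_pairs natr_sum.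
apply: (@le_trans _ _ (\sum_(v in D) (y * #|C|%:R))); last first.
  by rewrite sumr_const -[_ *+ #|D|]mulr_natr mulrAC.
apply: ler_sum => v vD; apply: le_trans (le_trans (sp v (subsetP sD v vD)) xy).
rewrite ler_nat; apply/subset_leq_card/subsetP => u.
by rewrite !inE => /andP[/(subsetP sC) -> ->].
Qed.

End EdgeCounting.

Lemma exprn_mul_le_div (R : numFieldType) (y k A : R) n :
  0 < y -> 0 < k -> k <= y^-1 -> 0 <= A -> y ^+ n * A <= A / k ^+ n.
Proof.
move=> y_gt0 k_gt0 ky A_ge0; rewrite ler_pdivlMr ?exprn_gt0 //.
rewrite mulrAC -exprMn mulrC; apply: ler_piMr => //.
apply: exprn_ile1; first exact: mulr_ge0 (ltW y_gt0) (ltW k_gt0).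
by rewrite -(mulfV (lt0r_neq0 y_gt0)) ler_pM2l.
Qed.

Section GoodFamilies.
Variables (R : realFieldType) (T : finType) (e : rel T).
Hypothesis e_sym : symmetric e.
Variables (eps : R) (d : nat).
Hypotheses (eps_gt0 : 0 < eps) (eps_le1 : eps <= 1) (d_gt0 : (0 < d)%N).
Let eps_ge0 : 0 <= eps := ltW eps_gt0.
Let N : R := #|T|%:R.
Hypothesis N_gt0 : 0 < N.
Let x : R := eps ^+ (5 * d).
Implicit Types (A F C D : {set T}) (B : seq {set T}) (P : {set {set T}}).

Definition good C D := complete e C D \/ weakly_sparse e (eps ^+ d) C D.

Definition pure_or_sparse B := pure_blockade e B \/ sparse_blockade e x B.

Definition admissible F (k : nat) B :=
  blockade F B /\ (k <= size B)%N /\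
  width_ge B (#|F|%:R / k%:R ^+ d : R) /\ pure_or_sparse B.

Definition wide_good_blockade :=
  exists B, blockade [set: T] B /\ eps^-1 <= (size B)%:R /\
    width_ge B (x ^+ (2 * d) * N) /\
    (forall i j, (i < size B)%N -> (j < size B)%N -> i != j ->
       good (nth set0 B i) (nth set0 B j)).

Definition good_family F P :=
  [/\ forall C, C \in P -> C \subset F,
      forall C D, C \in P -> D \in P -> C != D -> [disjoint C & D],
      forall C, C \in P -> eps ^+ (2 * d) * N <= #|C|%:R &
      forall C D, C \in P -> D \in P -> C != D -> good C D].

Definition rich_family F P :=
  good_family F P /\ #|F|%:R <= eps ^+ d * #|P|%:R ^+ d * N.

Lemma x_gt0 : 0 < x. Proof. exact: exprn_gt0. Qed.

Lemma eps_expr_le m n : (n <= m)%N -> eps ^+ m <= eps ^+ n.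
Proof. exact: ler_wiXn2l. Qed.

Lemma good_sym C D : good C D -> good D C.
Proof.
by case=> [cCD | sCD]; [left; apply: complete_sym | right; apply: weakly_sparse_sym].
Qed.

Lemma pure_or_sparse_good_lt B i j C D : pure_or_sparse B ->
  (i < j)%N -> (j < size B)%N ->
  C \subset nth set0 B i -> D \subset nth set0 B j ->
  x * #|nth set0 B i|%:R <= eps ^+ d * #|C|%:R -> good C D.
Proof.
move=> [pB | sB] ij jB sC sD xC.
- case: (pB i j ij jB) => [cB | aB]; first by left; apply: complete_sub cB.
  right; apply: anticomplete_weakly_sparse; first exact: exprn_ge0.
  exact: anticomplete_sub aB.
- right; apply: weakly_sparse_sym => //.
  exact: sparse_to_weakly_sparse (sB i j ij jB) sC sD xC.
Qed.

Lemma pure_or_sparse_good B i j C D : pure_or_sparse B ->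
  (i < size B)%N -> (j < size B)%N -> i != j ->
  C \subset nth set0 B i -> D \subset nth set0 B j ->
  x * #|nth set0 B i|%:R <= eps ^+ d * #|C|%:R ->
  x * #|nth set0 B j|%:R <= eps ^+ d * #|D|%:R -> good C D.
Proof.
move=> pB iB jB; case: ltngtP => // [ij | ji] _ sC sD xC xD.
  exact: pure_or_sparse_good_lt pB ij jB sC sD xC.
exact/good_sym/(pure_or_sparse_good_lt pB ji iB sD sC xD).
Qed.

Lemma x_mul_card_le A C :
  eps ^+ (2 * d) * N <= #|C|%:R -> x * #|A|%:R <= eps ^+ d * #|C|%:R.
Proof.
move=> C_large; apply: (@le_trans _ _ (x * N)).
  by rewrite ler_pM2l ?x_gt0 // ler_nat max_card.
apply: le_trans (ler_wpM2l (exprn_ge0 d eps_ge0) C_large).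
by rewrite mulrA -exprD ler_pM2r // eps_expr_le //; lia.
Qed.

Lemma wide_good_blockade_of_admissible F k B :
  eps ^+ d * N <= #|F|%:R -> k%:R <= x^-1 -> eps^-1 <= k%:R ->
  admissible F k B -> wide_good_blockade.
Proof.
move=> F_large kx epsk [blB [kB [wB pB]]].
have k_gt0 : 0 < k%:R :> R by apply: lt_le_trans epsk; rewrite invr_gt0.
have xd : x ^+ d <= eps ^+ d.
  by rewrite /x -exprM eps_expr_le //; nia.
exists B; split; first by case: blB => _ disjB; split=> // i _; apply: subsetT.
split; first by apply: le_trans epsk _; rewrite ler_nat.
split=> [i iB | i j iB jB ij].
  apply: le_trans (wB i iB).
  apply: le_trans (exprn_mul_le_div d x_gt0 k_gt0 kx (ler0n _ _)).
  rewrite mul2n -addnn exprD -mulrA ler_pM2l ?exprn_gt0 ?x_gt0 //.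
  by apply: le_trans F_large; rewrite ler_pM2r.
by apply: pure_or_sparse_good pB iB jB ij _ _ _ _ => //;
  apply: ler_wpM2r => //; apply: eps_expr_le; lia.
Qed.

Lemma good_family_set1 C : eps ^+ (2 * d) * N <= #|C|%:R -> good_family C [set C].
Proof.
by move=> C_large; split=> [D /set1P-> | D D' /set1P-> /set1P-> | D /set1P-> |
  D D' /set1P-> /set1P->]; rewrite ?eqxx.
Qed.

Lemma good_family_card_gt0 F P C : good_family F P -> C \in P -> (0 < #|C|)%N.
Proof.
case=> _ _ P_large _ CP; rewrite -(ltr0n R); apply: lt_le_trans (P_large C CP).
by rewrite mulr_gt0 // exprn_gt0.
Qed.

Section Union.
Variables (F : {set T}) (B : seq {set T}) (f : 'I_(size B) -> {set {set T}}).
Hypotheses (blB : blockade F B)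
  (ff : forall i : 'I_(size B), good_family (nth set0 B i) (f i)).

Lemma good_family_bigcup : pure_or_sparse B -> good_family F (\bigcup_i f i).
Proof.
move=> pB; have [subB _] := blB.
have disjB (i j : 'I_(size B)) : i != j -> [disjoint nth set0 B i & nth set0 B j].
  exact: blockade_disjoint blB (ltn_ord i) (ltn_ord j).
split.
- move=> C /bigcupP[i _ Ci]; have [subBi _ _ _] := ff i.
  exact: subset_trans (subBi C Ci) (subB i (ltn_ord i)).
- move=> C D /bigcupP[i _ Ci] /bigcupP[j _ Dj] CD.
  have [eij | ij] := eqVneq i j.
    by subst i; have [_ disj _ _] := ff j; apply: disj.
  have [[sC _ _ _] [sD _ _ _]] := (ff i, ff j).
  exact: disjointWl (sC C Ci) (disjointWr (sD D Dj) (disjB i j ij)).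
- by move=> C /bigcupP[i _ Ci]; have [_ _ large _] := ff i; apply: large.
- move=> C D /bigcupP[i _ Ci] /bigcupP[j _ Dj] CD.
  have [eij | ij] := eqVneq i j.
    by subst i; have [_ _ _ goodf] := ff j; apply: goodf.
  have [[sC _ lC _] [sD _ lD _]] := (ff i, ff j).
  apply: pure_or_sparse_good pB (ltn_ord i) (ltn_ord j) ij (sC C Ci) (sD D Dj) _ _.
    exact/x_mul_card_le/lC.
  exact/x_mul_card_le/lD.
Qed.

Lemma card_bigcup_good_family : #|\bigcup_i f i| = (\sum_i #|f i|)%N.
Proof.
rewrite -sum1_card partition_disjoint_bigcup => [|i j ij].
  by apply: eq_bigr => i _; rewrite sum1_card.
rewrite -setI_eq0; apply/eqP/setP => C; rewrite !inE; apply/andP => -[Ci Cj].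
have [[sC _ _ _] [sD _ _ _]] := (ff i, ff j).
have := blockade_disjoint blB (ltn_ord i) (ltn_ord j) ij.
move=> /(disjointWr (sD C Cj)) /(disjointWl (sC C Ci)).
rewrite -setI_eq0 setIid => /eqP C0.
by have := good_family_card_gt0 (ff i) Ci; rewrite C0 cards0.
Qed.

Lemma rich_family_bigcup k : (0 < k)%N -> admissible F k B ->
  (forall i, #|F|%:R <= eps ^+ d * (k%:R * #|f i|%:R) ^+ d * N) ->
  rich_family F (\bigcup_i f i).
Proof.
move=> k_gt0 [_ [kB [_ pB]]] F_le; split; first exact: good_family_bigcup.
have B_gt0 : (0 < size B)%N by apply: leq_trans kB.
have [j _ j_min] := @arg_minnP _ (Ordinal B_gt0) xpredT (fun i => #|f i|) isT.
apply: le_trans (F_le j) _; rewrite ler_pM2r // ler_pM2l ?exprn_gt0 //.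
rewrite ler_pXn2r ?nnegrE ?mulr_ge0 ?ler0n // -natrM ler_nat card_bigcup_good_family.
apply: (@leq_trans (\sum_(i < size B) #|f j|)).
  by rewrite sum_nat_const card_ord leq_mul2r kB orbT.
by apply: leq_sum => i _; apply: j_min.
Qed.

End Union.

Hypothesis blockade_hyp : forall F, eps ^+ d * N <= #|F|%:R ->
  exists k : nat, (2 <= k)%N /\ k%:R <= x^-1 /\ exists B, admissible F k B.

Lemma rich_family_exists : ~ wide_good_blockade ->
  forall F, eps ^+ d * N <= #|F|%:R -> exists P, rich_family F P.
Proof.
move=> no_wide F; have [n] := ubnP #|F|.
elim: n F => // n IH F /ltnSE F_le F_large.
have [k [k_ge2 [kx [B admB]]]] := blockade_hyp F_large.
have k_gt0 : 0 < k%:R :> R by rewrite ltr0n; lia.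
have [epsk | keps] := lerP eps^-1 k%:R.
  by case: no_wide; apply: wide_good_blockade_of_admissible admB.
have [blB [kB [wB _]]] := admB.
have wBi (i : 'I_(size B)) :
  #|F|%:R / k%:R ^+ d <= #|nth set0 B i|%:R := wB i (ltn_ord i).
have [small | large] := ltP (#|F|%:R / k%:R ^+ d) (eps ^+ d * N).
  exists (\bigcup_(i < size B) [set nth set0 B i]).
  apply: (rich_family_bigcup blB _ _ admB) => [i||i].
  - apply: good_family_set1; apply: le_trans (wBi i).
    apply: le_trans (exprn_mul_le_div d eps_gt0 k_gt0 (ltW keps) (ler0n _ _)).
    by rewrite mul2n -addnn exprD -mulrA ler_pM2l ?exprn_gt0.
  - exact: ltnW.
  - rewrite ltr_pdivrMr ?exprn_gt0 // in small.
    by rewrite cards1 mulr1 mulrAC; apply: ltW.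
have legal (i : 'I_(size B)) : eps ^+ d * N <= #|nth set0 B i|%:R.
  exact: le_trans large (wBi i).
have rich (i : 'I_(size B)) : exists P, rich_family (nth set0 B i) P.
  apply: IH (legal i); apply: leq_trans F_le.
  apply: blockade_card_lt blB _ _ (ltn_ord i); first exact: leq_trans kB.
  move=> j jB; rewrite -(ltr0n R); apply: lt_le_trans (legal (Ordinal jB)).
  by rewrite mulr_gt0 ?exprn_gt0.
have [f rf] := fin_all_exists rich.
exists (\bigcup_i f i); apply: (rich_family_bigcup blB _ _ admB) => [i||i].
- by case: (rf i).
- exact: ltnW.
have [_ Bi_le] := rf i.
have := wBi i; rewrite ler_pdivrMr ?exprn_gt0 // => /le_trans; apply.
apply: le_trans (ler_wpM2r _ Bi_le) _; first by rewrite exprn_ge0 ?ler0n.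
by rewrite exprMn [k%:R ^+ d * _]mulrC mulrA mulrAC.
Qed.

Lemma wide_good_blockade_of_rich_family P :
  rich_family [set: T] P -> wide_good_blockade.
Proof.
move=> [[_ disjP P_large goodP] T_le].
have nth_in i : (i < size (enum P))%N -> nth set0 (enum P) i \in P.
  by move=> iP; rewrite -mem_enum mem_nth.
exists (enum P); split; first by apply: blockade_enum => // C _; apply: subsetT.
split.
  have : 1 <= eps * #|P|%:R.
    rewrite -(ler_pXn2r d_gt0) ?nnegrE ?mulr_ge0 // expr1n exprMn.
    by rewrite cardsT in T_le; rewrite -(ler_pM2r N_gt0) mul1r.
  by rewrite -cardE -ler_pdivrMl // mulr1.
split=> [i iP | i j iP jP ij].
  apply: le_trans (P_large _ (nth_in i iP)); rewrite ler_pM2r // /x -exprM.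
  by apply: eps_expr_le; nia.
by apply: goodP; rewrite ?nth_in // nth_uniq ?enum_uniq.
Qed.

Lemma wide_good_blockade_holds : wide_good_blockade.
Proof.
apply: NNPP => no_wide.
have T_large : eps ^+ d * N <= #|[set: T]|%:R.
  by rewrite cardsT; apply: ler_piMl; [exact: ler0n | exact: exprn_ile1].
have [P richP] := rich_family_exists no_wide T_large.
exact: no_wide (wide_good_blockade_of_rich_family richP).
Qed.

End GoodFamilies.

Unset Implicit Arguments.

Theorem theorem6p1 (R : realFieldType) (T : finType) (e : rel T)
  (e_sym : symmetric e) (e_irr : irreflexive e) (eps : R) (d : nat) :
  0 < eps -> eps < 1 / 2 -> (1 <= d)%N ->
  eps ^- (10 * d ^ 2) <= (#|T|)%:R ->
  (forall F : {set T}, eps ^+ d * (#|T|)%:R <= (#|F|)%:R ->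
     exists k : nat, (2 <= k)%N /\ k%:R <= (eps ^+ (5 * d))^-1 /\
       exists B : seq {set T}, blockade F B /\ (k <= size B)%N /\
         width_ge (R:=R) B ((#|F|)%:R / k%:R ^+ d) /\
         (pure_blockade e B \/ sparse_blockade e (eps ^+ (5 * d)) B)) ->
  exists B : seq {set T}, blockade [set: T] B /\
    eps^-1 <= (size B)%:R /\
    width_ge (R:=R) B ((eps ^+ (5 * d)) ^+ (2 * d) * (#|T|)%:R) /\
    (forall i j, (i < size B)%N -> (j < size B)%N -> i != j ->
       complete e (nth set0 B i) (nth set0 B j) \/
       weakly_sparse e (eps ^+ d) (nth set0 B i) (nth set0 B j)).
Proof.
move=> eps_gt0 eps_lt_half d_gt0 T_large blockade_hyp.
have N_gt0 : 0 < #|T|%:R :> R.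
  by apply: lt_le_trans T_large; rewrite invr_gt0 exprn_gt0.
have eps_le1 : eps <= 1 by lra.
exact (wide_good_blockade_holds e_sym eps_gt0 eps_le1 d_gt0 N_gt0 blockade_hyp).
Qed.
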